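(* In a network satisfying (H1) and (H2), let $Y+S_0\rightleftarrows U_1\to Y+S_1\rightleftarrows\cdots\rightleftarrows U_L\to Y+S_L$ ($L\ge1$) be a connected component with rate constants $a_j,b_j,c_j$ as in the context. Fix $1\le n\le L$ and $0\le k\le n-1$. Let $\ell$ be the minimal positive integer such that a monomial $y^r u_{n-k}$ with some $r\ge0$ appears in $s_n^{(\ell)}$. Then $\ell=2k+1$, $r=k$, and the coefficient of $y^k u_{n-k}$ in $s_n^{(2k+1)}$ is \[c_{n-k}\prod_{j=0}^{k-1}a_{n-j}\,c_{n-j}\] (the empty product being $1$).
   Context: Species are capital letters, concentrations lower-case letters. Mass-action system: $\dot{\mathbf{x}}=\sum_{y\to y'}k_{yy'}\mathbf{x}^y(y'-y)$, rates $k_{yy'}>0$. Total derivative: $\dot\varphi=\sum_i\frac{\partial\varphi}{\partial x_i}\dot x_i$ with $\dot x_i$ replaced by the right-hand side; $\varphi^{(\ell)}$ the $\ell$-th iterate, a polynomial in concentrations with coefficients polynomial in the rate constants; a monomial appears if its coefficient is nonzero. (H1) Every connected component has the form $Y+S_0\rightleftarrows U_1\to\cdots\rightleftarrows U_L\to Y+S_L$: reactions $Y+S_{j-1}\to U_j$ (rate $a_j$), $U_j\to Y+S_{j-1}$ (rate $b_j$), $U_j\to Y+S_j$ (rate $c_j$); unique enzyme $Y$; intermediates distinct throughout the network; non-intermediates of a component pairwise distinct but may appear in other components; each complex in a unique component. $\mathscr{S}_U$ = substrates/products of the component of intermediate $U$. (H2) A partition $\mathscr{S}^{(0)}\sqcup\cdots\sqcup\mathscr{S}^{(M)}$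 ($M\ge2$, nonempty, $\mathscr{S}^{(0)}$ the intermediates) with: for each intermediate $U$ with enzyme $Y$, some $\alpha\ge1$ has $\mathscr{S}_U\subseteq\mathscr{S}^{(\alpha)}$, $Y\notin\mathscr{S}^{(\alpha)}$. *)

(* Polynomials are represented as formal sums of terms
   (integer coefficient, monomial); a monomial is a multiset (seq up to
   perm_eq) of variables, the variables being species concentrations (inl)
   and symbolic rate constants (inr).  Thus "polynomial in concentrations
   with coefficients polynomial in the rate constants" = polynomial over int
   in both kinds of variables. *)
From HB Require Import structures.
From mathcomp Require Import all_boot all_order all_algebra.
Set Implicit Arguments. Unset Strict Implicit. Unset Printing Implicit Defensive.
Import Order.TTheory GRing.Theory Num.Theory.
Local Open Scope ring_scope.

(* kind of reaction in a component: a_j (binding), b_j (unbinding), c_j (catalysis) *)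
Inductive rkind := RA | RB | RC.
Definition rkind_eqb (a b : rkind) : bool :=
  match a, b with RA, RA | RB, RB | RC, RC => true | _, _ => false end.
Lemma rkind_eqP : Equality.axiom rkind_eqb.
Proof. by case; case; constructor. Qed.
HB.instance Definition _ := hasDecEq.Build rkind rkind_eqP.

Section Network.
Variables (S : eqType) (C : finType).

(* rate constant label (component, index j, kind): k_(c,j,RA) = a_j etc. *)
Definition rlabel := (C * nat * rkind)%type.
Definition var := (S + rlabel)%type.
Definition mono := seq var.
Definition term := (int * mono)%type.
Definition crnpoly := seq term.

Definition coef (p : crnpoly) (m : mono) : int :=
  \sum_(t <- p | perm_eq t.2 m) t.1.

(* reaction: (reactant complex, product complex, rate label); complexes are
   multisets of species *)
Definition reaction := (seq S * seq S * rlabel)%type.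

Definition species_of (m : mono) : seq S :=
  undup (pmap (fun v : var => if v is inl x then Some x else None) m).

(* total derivative along the mass-action system of the network *)
Definition ddt (net : seq reaction) (p : crnpoly) : crnpoly :=
  flatten [seq flatten [seq
     [seq ((t.1 * (count_mem (inl x : var) t.2)%:Z
              * ((count_mem x r.1.2)%:Z - (count_mem x r.1.1)%:Z)),
           rem (inl x : var) t.2 ++ map (@inl S rlabel) r.1.1 ++ [:: (inr r.2 : var)])
     | r <- net]
   | x <- species_of t.2] | t <- p].

(* "a monomial (in the concentrations) m appears in p": its coefficient,
   a polynomial in the rate constants, is nonzero *)
Definition appears (p : crnpoly) (m : mono) : Prop :=
  exists w : seq rlabel, coef p (m ++ map (@inr S rlabel) w) != 0.

Variables (L : C -> nat) (Y : C -> S) (Sb U : C -> nat -> S).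

(* component c : Y+S_0 <-> U_1 -> Y+S_1 <-> ... <-> U_(L c) -> Y+S_(L c) *)
Definition comp_reactions (c : C) : seq reaction :=
  flatten [seq [:: ([:: Y c; Sb c j.-1], [:: U c j], (c, j, RA));
                   ([:: U c j], [:: Y c; Sb c j.-1], (c, j, RB));
                   ([:: U c j], [:: Y c; Sb c j], (c, j, RC))]
          | j <- iota 1 (L c)].

Definition network : seq reaction := flatten [seq comp_reactions c | c <- enum C].

Definition is_intermediate (x : S) : Prop :=
  exists c j, (0 < j <= L c)%N /\ x = U c j.

Definition H1 : Prop :=
  (forall c, 0 < L c)%N /\
  (forall c c' j j', (0 < j <= L c)%N -> (0 < j' <= L c')%N ->
      U c j = U c' j' -> c = c' /\ j = j') /\
  (forall c, uniq (Y c :: [seq Sb c i | i <- iota 0 (L c).+1])) /\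
  (forall c c' i i', (i <= L c)%N -> (i' <= L c')%N ->
      perm_eq [:: Y c; Sb c i] [:: Y c'; Sb c' i'] -> c = c') /\
  (forall c j c', (0 < j <= L c)%N ->
      U c j <> Y c' /\ (forall i, (i <= L c')%N -> U c j <> Sb c' i)) /\
  (forall x : S, exists c, x = Y c \/ (exists i, (i <= L c)%N /\ x = Sb c i)
                         \/ (exists j, (0 < j <= L c)%N /\ x = U c j)).

(* partition S^(0) |_| ... |_| S^(M) given by the class index part x *)
Definition H2 (part : S -> nat) (M : nat) : Prop :=
  (2 <= M)%N /\
  (forall x, part x <= M)%N /\
  (forall a, (a <= M)%N -> exists x, part x = a) /\
  (forall x, part x = 0%N <-> is_intermediate x) /\
  (forall c j, (0 < j <= L c)%N ->
     exists a, (0 < a)%N /\ (forall i, (i <= L c)%N -> part (Sb c i) = a)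
               /\ part (Y c) <> a).

End Network.

(* A derivative step replaces one species x of a monomial by the reactant complex of
   a reaction changing x, and multiplies by its rate constant.  Count an intermediate
   U_j as its complex Y + S_(j-1) plus one, and give S_i the weight 2 (i + 1 - (n - k))
   (zero when i < n - k).  Then s_n has weight 2k + 2 and y^r u_(n-k) has weight 1.
   As long as a monomial carries exactly one species of the class of the substrates
   and nothing foreign to the component (other than Y), one step lowers the weight by
   at most one, and by exactly one only when S_i (i >= n - k) is replaced by U_i or
   U_j by Y S_(j-1); monomials violating that condition never recover it.  Hence
   y^r u_(n-k) needs 2k + 1 steps, and in 2k + 1 steps it is only reached along
   s_n, u_n, y s_(n-1), u_(n-1), ..., u_(n-k), which produces the stated coefficient. *)

From HB Require Import structures.
From mathcomp Require Import all_boot all_order all_algebra.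
From mathcomp Require Import zify ring.
Import GRing.Theory Num.Theory.
Set Implicit Arguments. Unset Strict Implicit. Unset Printing Implicit Defensive.

Lemma perm_rem (T : eqType) (x : T) (s1 s2 : seq T) :
  perm_eq s1 s2 -> perm_eq (rem x s1) (rem x s2).
Proof.
move=> p12; have [x1 | x1] := boolP (x \in s1); last first.
  by rewrite !rem_id // -(perm_mem p12).
have x2 : x \in s2 by rewrite -(perm_mem p12).
rewrite -(perm_cons x); apply: perm_trans (perm_to_rem x2).
by apply: perm_trans p12; rewrite perm_sym perm_to_rem.
Qed.

Lemma flatten_map_uniq (T1 T2 : eqType) (f : T1 -> seq T2) (s : seq T1) :
  uniq s -> {in s, forall a, uniq (f a)} ->
  {in s &, forall a b y, y \in f a -> y \in f b -> a = b} ->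
  uniq (flatten (map f s)).
Proof.
elim: s => //= a s IH /andP[a_s s_uniq] f_uniq f_disj.
rewrite cat_uniq f_uniq ?mem_head //= IH //; last 2 first.
- by move=> b bs; rewrite f_uniq // inE bs orbT.
- by move=> b b' bs b's y; apply: f_disj; rewrite inE ?bs ?b's ?orbT.
rewrite andbT; apply/hasPn => y /flattenP[_ /mapP[b bs ->] yb]; apply/negP => ya.
by move: a_s; rewrite (f_disj a b _ _ y) ?mem_head ?inE ?bs ?orbT.
Qed.

Lemma big_seq_only (R : nmodType) (T : eqType) (s : seq T) (a : T) (F : T -> R) :
  uniq s -> a \in s -> {in s, forall b, b != a -> F b = 0%R} -> (\sum_(b <- s) F b)%R = F a.
Proof.
move=> s_uniq a_s F0; rewrite (bigD1_seq a) //= big_seq_cond big1 ?addr0 //.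
by move=> b /andP[bs ba]; apply: F0.
Qed.

Section Derivative.
Variables (S : eqType) (C : finType).
Implicit Types (m : mono S C) (t : term S C) (p : crnpoly S C) (r : reaction S C).
Local Open Scope ring_scope.

Definition dmono m x r : mono S C := rem (inl x) m ++ map inl r.1.1 ++ [:: inr r.2].

Definition dterm t x r : term S C :=
  (t.1 * (count_mem (inl x) t.2)%:Z * ((count_mem x r.1.2)%:Z - (count_mem x r.1.1)%:Z),
   dmono t.2 x r).

Lemma ddtE net p : ddt net p =
  flatten [seq flatten [seq [seq dterm t x r | r <- net] | x <- species_of t.2] | t <- p].
Proof. by []. Qed.

Lemma mem_species_of m x : (x \in species_of m) = (inl x \in m).
Proof.
rewrite mem_undup mem_pmap; apply/mapP/idP => [[[s|//] xm [->]] // | xm].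
by exists (inl x).
Qed.

Lemma perm_dmono m1 m2 x r : perm_eq m1 m2 -> perm_eq (dmono m1 x r) (dmono m2 x r).
Proof. by move=> p12; rewrite perm_cat2r perm_rem. Qed.

Lemma dterm_neq0 t x r : (dterm t x r).1 != 0 ->
  t.1 != 0 /\ count_mem x r.1.2 != count_mem x r.1.1.
Proof.
by rewrite /= !mulf_eq0 !negb_or subr_eq0 eqz_nat => /andP[/andP[-> _] ->].
Qed.

Lemma mem_ddt net p t' : t' \in ddt net p ->
  exists t x r, [/\ t \in p, inl x \in t.2, r \in net & t' = dterm t x r].
Proof.
rewrite ddtE => /flattenP[_ /mapP[t tp ->]] /flattenP[_ /mapP[x xt ->]] /mapP[r rnet ->].
by exists t, x, r; rewrite -mem_species_of.
Qed.

Lemma coef_perm p m1 m2 : perm_eq m1 m2 -> coef p m1 = coef p m2.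
Proof.
move=> p12; apply: eq_bigl => t; apply/idP/idP => h.
  exact: perm_trans p12.
by apply: perm_trans h _; rewrite perm_sym.
Qed.

Lemma coef_neq0 p m : coef p m != 0 -> exists t, [/\ t \in p, perm_eq t.2 m & t.1 != 0].
Proof.
move=> nz; have /hasP[t tp /andP[tm t0]] : has (fun t => perm_eq t.2 m && (t.1 != 0)) p.
  apply: contraR nz => /hasPn none; rewrite /coef big_seq_cond big1 // => t /andP[tp tm].
  by apply/eqP; move: (none t tp); rewrite tm negbK.
by exists t.
Qed.

Lemma coef_ddt net p m : coef (ddt net p) m =
  \sum_(t <- p) \sum_(x <- species_of t.2) \sum_(r <- net)
     (if perm_eq (dmono t.2 x r) m then (dterm t x r).1 else 0).
Proof.
rewrite /coef big_mkcond ddtE big_flatten big_map; apply: eq_bigr => t _.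
by rewrite big_flatten big_map; apply: eq_bigr => x _; rewrite big_map.
Qed.

Definition msum (f : S -> nat) m : nat := \sum_(v <- m) if v is inl s then f s else 0%N.

Lemma msum_perm f m1 m2 : perm_eq m1 m2 -> msum f m1 = msum f m2.
Proof. exact: perm_big. Qed.

Lemma msum_rem f m x : inl x \in m -> msum f m = (f x + msum f (rem (inl x) m))%N.
Proof. by move=> xm; rewrite /msum (perm_big _ (perm_to_rem xm)) big_cons. Qed.

Lemma msum_dmono f m x r :
  msum f (dmono m x r) = (msum f (rem (inl x) m) + \sum_(s <- r.1.1) f s)%N.
Proof. by rewrite /msum !big_cat big_map big_seq1 /= addn0. Qed.

Section Path.
Variables (net : seq (reaction S C)) (N : nat) (reachable : nat -> mono S C -> Prop)
  (path : nat -> mono S C) (pspecies : nat -> S) (preaction : nat -> reaction S C).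
Hypotheses (net_uniq : uniq net) (reachable0 : reachable 0 (path 0)).
Hypothesis reachable_step : forall l m x r, (l < N)%N -> reachable l m -> inl x \in m ->
  r \in net -> count_mem x r.1.2 != count_mem x r.1.1 ->
  reachable l.+1 (dmono m x r) /\
  (perm_eq (dmono m x r) (path l.+1) -> [/\ perm_eq m (path l), x = pspecies l & r = preaction l]).
Hypotheses (path_step : forall l, (l < N)%N ->
              perm_eq (dmono (path l) (pspecies l) (preaction l)) (path l.+1))
  (count_pspecies : forall l, (l < N)%N -> count_mem (inl (pspecies l)) (path l) = 1%N)
  (preaction_net : forall l, (l < N)%N -> preaction l \in net)
  (preaction_produces : forall l, (l < N)%N ->
     count_mem (pspecies l) (preaction l).1.2 = 1%N /\
     count_mem (pspecies l) (preaction l).1.1 = 0%N).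

Definition path_invariant l p :=
  (forall t, t \in p -> t.1 != 0 -> reachable l t.2) /\ coef p (path l) = 1.

Lemma dterm_path_coef l t : (l < N)%N -> (t.1 != 0 -> reachable l t.2) ->
  \sum_(x <- species_of t.2) \sum_(r <- net)
     (if perm_eq (dmono t.2 x r) (path l.+1) then (dterm t x r).1 else 0)
  = if perm_eq t.2 (path l) then t.1 else 0.
Proof.
move=> lN t_reach.
have summand0 x r : inl x \in t.2 -> r \in net ->
    ~ [/\ perm_eq t.2 (path l), x = pspecies l & r = preaction l] ->
    (if perm_eq (dmono t.2 x r) (path l.+1) then (dterm t x r).1 else 0) = 0.
  move=> xt rnet not_path.
  have [/dterm_neq0[t0 dx] | /negPn/eqP ->] := boolP ((dterm t x r).1 != 0); last by case: ifP.
  have [_ back] := reachable_step lN (t_reach t0) xt rnet dx.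
  by case: ifP => // /back.
have [tp | not_tp] := boolP (perm_eq t.2 (path l)); last first.
  rewrite big_seq big1 // => x; rewrite mem_species_of => xt.
  by rewrite big_seq big1 // => r rnet; apply: summand0 => // -[tp]; rewrite tp in not_tp.
have xt : inl (pspecies l) \in t.2.
  by rewrite (perm_mem tp) -has_pred1 has_count count_pspecies.
rewrite (@big_seq_only _ _ _ (pspecies l)) ?undup_uniq ?mem_species_of //; last first.
  move=> x; rewrite mem_species_of => xt' xl; rewrite big_seq big1 // => r rnet.
  by apply: summand0 => // -[_ /eqP]; rewrite (negbTE xl).
rewrite (@big_seq_only _ _ _ (preaction l)) ?preaction_net //; last first.
  by move=> r rnet rl; apply: summand0 => // -[_ _ /eqP]; rewrite (negbTE rl).
rewrite (perm_trans (perm_dmono _ _ tp) (path_step lN)) /= (permP tp) count_pspecies //.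
have [-> ->] := preaction_produces lN.
by rewrite subr0 !mulr1.
Qed.

Lemma path_invariant_ddt l p : (l < N)%N -> path_invariant l p -> path_invariant l.+1 (ddt net p).
Proof.
move=> lN [p_reach p_coef]; split.
  move=> _ /mem_ddt[t [x [r [tp xt rnet ->]]]] /dterm_neq0[t0 dx].
  by have [] := reachable_step lN (p_reach t tp t0) xt rnet dx.
rewrite coef_ddt -p_coef /coef [RHS]big_mkcond; apply: eq_big_seq => t tp.
by apply: dterm_path_coef => // /(p_reach t tp).
Qed.

Lemma path_invariant_iter l : (l <= N)%N ->
  path_invariant l (iter l (ddt net) [:: (1, path 0)]).
Proof.
elim: l => [_ | l IH lN]; last by apply: path_invariant_ddt; [| apply: IH; lia].
split; last by rewrite /coef big_cons big_nil perm_refl addr0.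
by move=> t; rewrite inE => /eqP-> _.
Qed.

End Path.

End Derivative.

Section Network.
Variables (S : eqType) (C : finType) (L : C -> nat) (Y : C -> S) (Sb U : C -> nat -> S).
Local Notation net := (network L Y Sb U).

Definition rA c j : reaction S C := ([:: Y c; Sb c j.-1], [:: U c j], (c, j, RA)).
Definition rB c j : reaction S C := ([:: U c j], [:: Y c; Sb c j.-1], (c, j, RB)).
Definition rC c j : reaction S C := ([:: U c j], [:: Y c; Sb c j], (c, j, RC)).

Lemma mem_network r : r \in net <->
  exists c j, (0 < j <= L c)%N /\ [\/ r = rA c j, r = rB c j | r = rC c j].
Proof.
split.
  case/flattenP=> _ /mapP[c _ ->] /flattenP[_ /mapP[j jL ->]].
  rewrite mem_iota in jL; rewrite !inE => /or3P[] /eqP->; exists c, j; (split; first lia).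
  - exact: Or31.
  - exact: Or32.
  - exact: Or33.
case=> c [j [jL rj]]; apply/flattenP; exists (comp_reactions L Y Sb U c).
  by apply/mapP; exists c; rewrite ?mem_enum.
apply/flattenP; exists [:: rA c j; rB c j; rC c j].
  by apply/mapP; exists j; rewrite // mem_iota; lia.
by case: rj => ->; rewrite !inE eqxx ?orbT.
Qed.

Lemma network_uniq : uniq net.
Proof.
have comp_label c r : r \in comp_reactions L Y Sb U c -> r.2.1.1 = c.
  by case/flattenP=> _ /mapP[j _ ->]; rewrite !inE => /or3P[] /eqP->.
apply: flatten_map_uniq => [|c _|c c' _ _ r /comp_label <- /comp_label //].
  exact: enum_uniq.
apply: flatten_map_uniq => [|j _|j j' _ _ r]; first exact: iota_uniq.
  by rewrite /= !inE !xpair_eqE !andbF.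
by rewrite !inE => /or3P[] /eqP-> /or3P[] /eqP[].
Qed.

Section Hypotheses.
Hypothesis hH1 : H1 L Y Sb U.

Lemma U_inj c c' j j' : (0 < j <= L c)%N -> (0 < j' <= L c')%N ->
  U c j = U c' j' -> c = c' /\ j = j'.
Proof. by case: hH1 => _ [+ _]; apply. Qed.

Lemma U_neq_Y c j c' : (0 < j <= L c)%N -> U c j <> Y c'.
Proof. by case: hH1 => _ [_ [_ [_ [+ _]]]] => /[apply] /(_ c') []. Qed.

Lemma U_neq_Sb c j c' i : (0 < j <= L c)%N -> (i <= L c')%N -> U c j <> Sb c' i.
Proof. by case: hH1 => _ [_ [_ [_ [+ _]]]] => /[apply] /(_ c') [_] /[apply]. Qed.

Lemma complex_inj c c' i i' : (i <= L c)%N -> (i' <= L c')%N ->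
  Y c = Y c' -> Sb c i = Sb c' i' -> c = c'.
Proof.
case: hH1 => _ [_ [_ [uniq_comp _]]] iL i'L eY eS.
by apply: uniq_comp iL i'L _; rewrite eY eS.
Qed.

Definition substrates c := [seq Sb c i | i <- iota 0 (L c).+1].

Lemma mem_substrates c i : (i <= L c)%N -> Sb c i \in substrates c.
Proof. by move=> iL; rewrite map_f // mem_iota; lia. Qed.

Lemma Y_notin_substrates c : Y c \notin substrates c.
Proof. by case: hH1 => _ [_ [/(_ c) + _]]; rewrite cons_uniq => /andP[]. Qed.

Lemma Y_neq_Sb c i : (i <= L c)%N -> Y c <> Sb c i.
Proof. by move=> /mem_substrates iS eYS; move: (Y_notin_substrates c); rewrite eYS iS. Qed.

Lemma index_substrates c i : (i <= L c)%N -> index (Sb c i) (substrates c) = i.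
Proof.
move=> iL; have -> : Sb c i = nth (Y c) (substrates c) i.
  by rewrite (nth_map 0%N) ?nth_iota ?size_iota //; lia.
case: hH1 => _ [_ [/(_ c) + _]]; rewrite cons_uniq => /andP[_ S_uniq].
by rewrite index_uniq // size_map size_iota; lia.
Qed.

Lemma Sb_inj c i i' : (i <= L c)%N -> (i' <= L c)%N -> Sb c i = Sb c i' -> i = i'.
Proof. by move=> iL i'L e; rewrite -(index_substrates iL) e index_substrates. Qed.

Definition intermediates : seq (C * nat) := [seq (c, j) | c <- enum C, j <- iota 1 (L c)].

Definition locate s : option (C * nat) := ohead [seq p <- intermediates | U p.1 p.2 == s].

Lemma mem_intermediates c j : ((c, j) \in intermediates) = (0 < j <= L c)%N.
Proof.
apply/allpairsPdep/idP => [[c' [j' [_ + [-> ->]]]] | jL]; first by rewrite mem_iota; lia.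
by exists c, j; rewrite mem_enum mem_iota; split => //; lia.
Qed.

Lemma locateU c j : (0 < j <= L c)%N -> locate (U c j) = Some (c, j).
Proof.
move=> jL; rewrite /locate; set l := filter _ _.
have cj_l : (c, j) \in l by rewrite mem_filter mem_intermediates jL eqxx.
have only_cj : all (pred1 (c, j)) l.
  apply/allP => -[c' j']; rewrite mem_filter mem_intermediates => /andP[/eqP e j'L].
  by have [-> ->] := U_inj j'L jL e; rewrite /= eqxx.
by case: l cj_l only_cj => // p l' _ /andP[/eqP-> _].
Qed.

Lemma locate_notU s : (forall c j, (0 < j <= L c)%N -> U c j <> s) -> locate s = None.
Proof.
move=> notU; rewrite /locate (eq_in_filter (a2 := pred0)) ?filter_pred0 // => -[c j].
by rewrite mem_intermediates => /notU /eqP /negbTE.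
Qed.

Lemma locateY c : locate (Y c) = None.
Proof. by apply: locate_notU => c' j /U_neq_Y. Qed.

Lemma locateSb c i : (i <= L c)%N -> locate (Sb c i) = None.
Proof. by move=> iL; apply: locate_notU => c' j /U_neq_Sb; apply. Qed.

Definition tokens s : seq S := if locate s is Some (c, j) then [:: Y c; Sb c j.-1] else [:: s].
Definition isU s : nat := if locate s is Some _ then 1 else 0.

Lemma tokensY c : tokens (Y c) = [:: Y c].
Proof. by rewrite /tokens locateY. Qed.

Lemma tokensSb c i : (i <= L c)%N -> tokens (Sb c i) = [:: Sb c i].
Proof. by move=> iL; rewrite /tokens locateSb. Qed.

Lemma tokensU c j : (0 < j <= L c)%N -> tokens (U c j) = [:: Y c; Sb c j.-1].
Proof. by move=> jL; rewrite /tokens locateU. Qed.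

Lemma isUY c : isU (Y c) = 0%N.
Proof. by rewrite /isU locateY. Qed.

Lemma isUSb c i : (i <= L c)%N -> isU (Sb c i) = 0%N.
Proof. by move=> iL; rewrite /isU locateSb. Qed.

Lemma isUU c j : (0 < j <= L c)%N -> isU (U c j) = 1%N.
Proof. by move=> jL; rewrite /isU locateU. Qed.

Definition reactant_tokens (R : seq S) := flatten (map tokens R).

Lemma reaction_cases r x : r \in net -> count_mem x r.1.2 != count_mem x r.1.1 ->
  [\/ exists2 rest, perm_eq (reactant_tokens r.1.1) (tokens x ++ rest)
                  & (isU x <= \sum_(s <- r.1.1) isU s)%N,
      exists c j, [/\ (0 < j <= L c)%N, x = U c j & r = rA c j]
    | exists c j, [/\ (0 < j <= L c)%N, x = Sb c j & r = rC c j]].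
Proof.
case/mem_network=> c [j [jL rj]] dx.
have : x \in r.1.1 ++ r.1.2.
  apply: contraR dx; rewrite mem_cat negb_or => /andP[x1 x2].
  by rewrite !(count_memPn _).
have jL' : (j.-1 <= L c)%N by lia.
have jL'' : (j <= L c)%N by lia.
rewrite /reactant_tokens; case: rj => -> /=; rewrite !inE !big_cons big_nil /= !cats0;
  case/or3P => /eqP->; rewrite ?tokensY ?tokensSb ?tokensU ?isUY ?isUSb ?isUU //.
- by apply: Or31; exists [:: Sb c j.-1].
- by apply: Or31; exists [:: Y c]; rewrite // perm_sym perm_catC.
- by apply: Or32; exists c, j.
- by apply: Or31; exists [::]; rewrite ?cats0.
- by apply: Or31; exists [:: Sb c j.-1].
- by apply: Or31; exists [:: Y c]; rewrite // perm_sym perm_catC.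
- by apply: Or31; exists [::]; rewrite ?cats0.
- by apply: Or31; exists [:: Sb c j.-1].
- by apply: Or33; exists c, j.
Qed.

Definition tsum (w : S -> nat) s := \sum_(u <- tokens s) w u.

Lemma tsum_reactants w (R : seq S) :
  \sum_(u <- reactant_tokens R) w u = \sum_(s <- R) tsum w s.
Proof. by rewrite big_flatten big_map. Qed.

Section Partition.
Variables (part : S -> nat) (M : nat).
Hypothesis hH2 : H2 L Y Sb U part M.

Lemma substrate_class c :
  exists a, (forall i, (i <= L c)%N -> part (Sb c i) = a) /\ part (Y c) <> a.
Proof.
case: hH2 => _ [_ [_ [_ /(_ c 1%N)]]]; case: hH1 => /(_ c) Lc _.
by case=> [|a [_ classes]]; [lia | exists a].
Qed.

Lemma part_Sb c i i' : (i <= L c)%N -> (i' <= L c)%N -> part (Sb c i) = part (Sb c i').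
Proof. by have [a [aS _]] := substrate_class c => iL i'L; rewrite !aS. Qed.

Lemma part_Y_neq_Sb c i : (i <= L c)%N -> part (Y c) <> part (Sb c i).
Proof. by have [a [aS aY]] := substrate_class c => iL; rewrite aS. Qed.

Section Component.
Variables (c : C) (n k : nat).
Hypotheses (n_range : (1 <= n <= L c)%N) (k_lt_n : (k < n)%N).

Definition alpha := part (Sb c 0).
Definition in_alpha t : nat := part t == alpha.
Definition foreign t : nat := (t != Y c) && (part t != alpha).
Definition height t : nat :=
  if t \in substrates c then 2 * ((index t (substrates c)).+1 - (n - k)) else 0.
Definition weight s := (tsum height s + isU s)%N.

Lemma alpha_Sb i : (i <= L c)%N -> part (Sb c i) = alpha.
Proof. by move=> iL; apply: part_Sb. Qed.

Lemma alpha_Y : part (Y c) != alpha.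
Proof. by apply/eqP; apply: part_Y_neq_Sb. Qed.

Lemma height_Sb i : (i <= L c)%N -> height (Sb c i) = (2 * (i.+1 - (n - k)))%N.
Proof. by move=> iL; rewrite /height mem_substrates // index_substrates. Qed.

Lemma height_Y : height (Y c) = 0%N.
Proof. by rewrite /height (negbTE (Y_notin_substrates c)). Qed.

Lemma height_gt0 t : (0 < height t)%N ->
  exists i, [/\ (i <= L c)%N, t = Sb c i & (n - k <= i)%N].
Proof.
rewrite /height; case: ifP => // /mapP[i]; rewrite mem_iota => iL -> h.
by exists i; split; [lia | | move: h; rewrite index_substrates; lia].
Qed.

Definition rsum (f : S -> nat) (r : reaction S C) := \sum_(s <- r.1.1) f s.

Definition tight x r :=
  (exists c' j, [/\ (0 < j <= L c')%N, x = U c' j & r = rA c' j]) \/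
  (exists i, [/\ (n - k <= i <= L c)%N, x = Sb c i & r = rC c i]).

Definition potential_step x r :=
  let A := tsum in_alpha in let J := tsum foreign in
  [/\ (A x <= rsum A r)%N, (J x <= rsum J r)%N \/ (A x < rsum A r)%N,
      (0 < rsum J r)%N \/ (weight x <= (rsum weight r).+1)%N
    & weight x = (rsum weight r).+1 -> rsum J r = 0%N -> tight x r].

Lemma potential_step_sub x r rest : perm_eq (reactant_tokens r.1.1) (tokens x ++ rest) ->
  (isU x <= \sum_(s <- r.1.1) isU s)%N -> potential_step x r.
Proof.
move=> tok_perm isU_le.
have split_sum w : rsum (tsum w) r = (tsum w x + \sum_(u <- rest) w u)%N.
  by rewrite /rsum -tsum_reactants (perm_big _ tok_perm) big_cat.
have G : rsum weight r = (rsum (tsum height) r + \sum_(s <- r.1.1) isU s)%N.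
  by rewrite /rsum -big_split.
rewrite /potential_step G !split_sum /weight; split; lia.
Qed.

Lemma potential_step_bind c' j : (0 < j <= L c')%N -> potential_step (U c' j) (rA c' j).
Proof.
move=> jL; have j1L : (j.-1 <= L c')%N by lia.
rewrite /potential_step /rsum /weight /tsum !big_cons !big_nil tokensU // tokensY tokensSb //.
rewrite !big_cons !big_nil isUU // isUY isUSb //.
by split; [lia | left; lia | right; lia | left; exists c', j].
Qed.

Lemma potential_step_catalysis c' j : (0 < j <= L c')%N -> potential_step (Sb c' j) (rC c' j).
Proof.
move=> jL; have j1L : (j.-1 <= L c')%N by lia.
have e_part : part (Sb c' j) = part (Sb c' j.-1) by apply: part_Sb; lia.
rewrite /potential_step /rsum /weight /tsum !big_cons !big_nil tokensU // tokensSb; last lia.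
rewrite !big_cons !big_nil isUU // isUSb /foreign /in_alpha ?e_part; last lia.
have Y_S : Y c' != Sb c' j.-1 by apply/eqP/Y_neq_Sb.
have [-> | /height_gt0 [i [iL e_Sb ki]]] := posnP (height (Sb c' j)).
  split; [lia | | right; lia | lia].
  case: (part (Sb c' j.-1) == alpha) => /=; first by left; rewrite andbF; lia.
  case: (part (Y c') == alpha) => /=; first by right; lia.
  left; rewrite !andbT; case: (Y c' =P Y c) => [<- | _] /=; last lia.
  by move: Y_S; rewrite eq_sym => ->; lia.
have [ec | nc] := eqVneq c' c.
  subst c'; have eji : j = i by apply: (Sb_inj _ iL e_Sb); lia.
  subst j; rewrite height_Y height_Sb // height_Sb; last lia.
  split; [lia | | right; lia | by move=> *; right; exists i; split; [lia | |]].
  by left; rewrite alpha_Sb // eqxx !andbF.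
have nY : Y c' != Y c by apply: contra_neq nc => eY; apply: (complex_inj _ iL eY e_Sb); lia.
have nP : part (Y c') != alpha.
  by apply/eqP => eP; apply: (@part_Y_neq_Sb c' j.-1); rewrite // -e_part e_Sb alpha_Sb.
by rewrite nY nP /=; split; [lia | left; lia | left; lia | lia].
Qed.

Lemma potential_step_network r x : r \in network L Y Sb U ->
  count_mem x r.1.2 != count_mem x r.1.1 -> potential_step x r.
Proof.
move=> rnet dx.
case: (reaction_cases rnet dx) => [[rest] | [c' [j [jL -> ->]]] | [c' [j [jL -> ->]]]].
- exact: potential_step_sub.
- exact: potential_step_bind.
- exact: potential_step_catalysis.
Qed.

Definition nalpha (m : mono S C) := msum (tsum in_alpha) m.
Definition nforeign (m : mono S C) := msum (tsum foreign) m.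
Definition mweight (m : mono S C) := msum weight m.
Definition stray (m : mono S C) := (0 < nforeign m)%N || (1 < nalpha m)%N.

Lemma potentials_perm m1 m2 : perm_eq m1 m2 ->
  [/\ nalpha m1 = nalpha m2, nforeign m1 = nforeign m2 & mweight m1 = mweight m2].
Proof. by move=> p12; rewrite /nalpha /nforeign /mweight !(msum_perm _ p12). Qed.

Lemma dmono_step m x r : r \in network L Y Sb U -> count_mem x r.1.2 != count_mem x r.1.1 ->
  inl x \in m -> (0 < nalpha m)%N ->
  [/\ (nalpha m <= nalpha (dmono m x r))%N, stray m -> stray (dmono m x r),
      stray (dmono m x r) \/ (mweight m <= (mweight (dmono m x r)).+1)%N
    & mweight m = (mweight (dmono m x r)).+1 -> ~~ stray (dmono m x r) -> tight x r].
Proof.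
move=> rnet dx xm Am_gt0; have [sA sJ sG tight_eq] := potential_step_network rnet dx.
rewrite /stray /nalpha /nforeign /mweight !msum_dmono !(msum_rem _ xm) -!/(rsum _ r) in Am_gt0 *.
split; [lia | | | move=> eG /norP[J0 A1]; apply: tight_eq; lia].
- by case/orP => ?; apply/orP; case: sJ => ?; [left | right | right | right]; lia.
- by case: sG => ?; [left; apply/orP; left | right]; lia.
Qed.

Definition path_labels i : seq (rlabel C) :=
  flatten [seq [:: (c, (n - j)%N, RA); (c, (n - j)%N, RC)] | j <- iota 0 i].
Definition path_species l := if odd l then U c (n - l./2) else Sb c (n - l./2).
Definition path_reaction l := if odd l then rA c (n - l./2) else rC c (n - l./2).
Definition path_mono l : mono S C :=
  inl (path_species l) :: nseq l./2 (inl (Y c)) ++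
  map inr (if odd l then (c, (n - l./2)%N, RC) :: path_labels l./2 else path_labels l./2).

(* Every monomial of the [l]-th derivative of [s_n] satisfies [reachable l]. *)
Definition reachable l m :=
  (0 < nalpha m)%N /\ [\/ stray m, (2 * k + 2 < mweight m + l)%N | perm_eq m (path_mono l)].

Lemma path_index l : (l <= 2 * k + 1)%N -> (0 < n - l./2 <= L c)%N.
Proof. by have := odd_double_half l; lia. Qed.

Lemma path_species_neq_Y l : (l <= 2 * k + 1)%N -> path_species l <> Y c.
Proof.
move/path_index => jL; rewrite /path_species; case: ifP => _; first exact: U_neq_Y.
by move/esym; apply: Y_neq_Sb; lia.
Qed.

Lemma path_species_potentials l : (l <= 2 * k + 1)%N ->
  [/\ tsum in_alpha (path_species l) = 1%N, tsum foreign (path_species l) = 0%N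
    & weight (path_species l) + l = 2 * k + 2]%N.
Proof.
move=> lN; have jL := path_index lN; have := odd_double_half l.
rewrite /path_species /weight /tsum /in_alpha /foreign; case: ifP => /= odd_l dbl.
  rewrite tokensU // isUU // !big_cons !big_nil height_Y height_Sb ?alpha_Sb; try lia.
  by rewrite !eqxx (negbTE alpha_Y) /=; split; lia.
rewrite tokensSb ?isUSb ?big_seq1 ?height_Sb ?alpha_Sb; try lia.
by rewrite eqxx andbF; split; lia.
Qed.

Lemma Y_potentials : [/\ tsum in_alpha (Y c) = 0%N, tsum foreign (Y c) = 0%N & weight (Y c) = 0%N].
Proof.
rewrite /weight /tsum /in_alpha /foreign tokensY isUY !big_seq1 height_Y eqxx.
by rewrite (negbTE alpha_Y).
Qed.

Lemma msum_path f l : msum f (path_mono l) = (f (path_species l) + l./2 * f (Y c))%N.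
Proof.
by rewrite /msum big_cons big_cat /= big_nseq big_map big1 // addn0 iter_addn_0 mulnC.
Qed.

Lemma path_potentials l : (l <= 2 * k + 1)%N ->
  [/\ nalpha (path_mono l) = 1, nforeign (path_mono l) = 0
    & mweight (path_mono l) + l = 2 * k + 2]%N.
Proof.
move=> lN; have [A J G] := path_species_potentials lN; have [AY JY GY] := Y_potentials.
by rewrite /nalpha /nforeign /mweight !msum_path A J AY JY GY; split; lia.
Qed.

Lemma off_path l m : (l <= 2 * k + 1)%N -> stray m \/ (2 * k + 2 < mweight m + l)%N ->
  ~~ perm_eq m (path_mono l).
Proof.
move=> lN off; apply/negP => /potentials_perm[Am_m Jm_m Gm_m].
by have [] := path_potentials lN; move: off; rewrite /stray Am_m Jm_m Gm_m; lia.
Qed.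

Lemma path_labelsS i :
  path_labels i.+1 = path_labels i ++ [:: (c, (n - i)%N, RA); (c, (n - i)%N, RC)].
Proof. by rewrite /path_labels -addn1 iotaD map_cat flatten_cat /= add0n. Qed.

Lemma path_mono_step l :
  perm_eq (dmono (path_mono l) (path_species l) (path_reaction l)) (path_mono l.+1).
Proof.
rewrite -[l]odd_double_half; case: (odd l);
  rewrite /dmono /path_mono /path_species /path_reaction /= ?eqxx ?odd_double ?uphalf_double
          ?doubleK ?path_labelsS ?map_cat /=;
  by apply/permP => a; rewrite /= !count_cat /= ?subnS; ring.
Qed.

Lemma count_path_species l : (l < 2 * k + 1)%N ->
  count_mem (inl (path_species l)) (path_mono l) = 1%N.
Proof.
move=> lN; rewrite /path_mono /= eqxx count_cat count_nseq count_map /=.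
have -> : (inl (Y c) == inl (path_species l) :> var S C) = false.
  by apply/eqP => -[/esym]; apply: path_species_neq_Y; apply: ltnW.
by rewrite (@eq_count _ _ pred0) ?count_pred0.
Qed.

Lemma path_reaction_network l : (l < 2 * k + 1)%N ->
  path_reaction l \in network L Y Sb U.
Proof.
move/ltnW/path_index => jL; apply/mem_network; exists c, (n - l./2)%N; split => //.
by rewrite /path_reaction; case: ifP => _; [apply: Or31 | apply: Or33].
Qed.

Lemma path_reaction_produces l : (l < 2 * k + 1)%N ->
  count_mem (path_species l) (path_reaction l).1.2 = 1%N /\
  count_mem (path_species l) (path_reaction l).1.1 = 0%N.
Proof.
move/ltnW/path_index => jL; rewrite /path_species /path_reaction; case: ifP => _ /=.
  have /negbTE -> : Y c != U c (n - l./2) by apply/eqP => /esym; apply: U_neq_Y.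
  have /negbTE -> : Sb c (n - l./2).-1 != U c (n - l./2).
    by apply/eqP => /esym; apply: U_neq_Sb; lia.
  by rewrite eqxx.
have /negbTE -> : Y c != Sb c (n - l./2) by apply/eqP; apply: Y_neq_Sb; lia.
have /negbTE -> : U c (n - l./2) != Sb c (n - l./2) by apply/eqP; apply: U_neq_Sb; lia.
by rewrite eqxx.
Qed.

Lemma tight_path l x r : (l <= 2 * k + 1)%N -> inl x \in path_mono l -> tight x r ->
  x = path_species l /\ r = path_reaction l.
Proof.
move=> lN xp; have jL := path_index lN.
have [-> | -> ] : x = path_species l \/ x = Y c.
  move: xp; rewrite inE mem_cat mem_nseq => /orP[/eqP[] | /orP[/andP[_ /eqP[]] | /mapP[]]] //; auto.
- rewrite /path_species /path_reaction; case: ifP => _.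
    case=> [[c' [j [j'L e ->]]] | [i [iL e _]]]; last by case: (U_neq_Sb jL _ e); lia.
    by have [-> ->] := U_inj jL j'L e.
  case=> [[c' [j [j'L e _]]] | [i [iL e ->]]]; first by case: (U_neq_Sb j'L _ (esym e)); lia.
  by rewrite (Sb_inj _ _ e) //; lia.
- case=> [[c' [j [j'L e _]]] | [i [iL e _]]]; first by case: (U_neq_Y j'L (esym e)).
  by case: (Y_neq_Sb _ e); lia.
Qed.

Lemma reachable_perm l m1 m2 : perm_eq m1 m2 -> reachable l m1 -> reachable l m2.
Proof.
move=> p12; have [Am_m Jm_m Gm_m] := potentials_perm p12.
rewrite /reachable /stray Am_m Jm_m Gm_m => -[A reach]; split => //.
case: reach => [? | ? | p1]; [exact: Or31 | exact: Or32 | apply: Or33].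
by rewrite perm_sym in p12; apply: perm_trans p12 p1.
Qed.

Lemma reachable_step l m x r : (l < 2 * k + 1)%N -> reachable l m -> inl x \in m ->
  r \in network L Y Sb U -> count_mem x r.1.2 != count_mem x r.1.1 ->
  reachable l.+1 (dmono m x r) /\
  (perm_eq (dmono m x r) (path_mono l.+1) ->
   [/\ perm_eq m (path_mono l), x = path_species l & r = path_reaction l]).
Proof.
move=> lN [A_gt0 reach] xm rnet dx.
have [A_le stray_m' G_le tight_xr] := dmono_step rnet dx xm A_gt0.
set m' := dmono m x r in A_le stray_m' G_le tight_xr *.
have key : [\/ stray m', (2 * k + 2 < mweight m' + l.+1)%N
             | [/\ perm_eq m (path_mono l), x = path_species l & r = path_reaction l]].
  case: reach => [/stray_m' | G_big | mp]; first exact: Or31.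
    by case: G_le => [s | G_le]; [exact: Or31 | apply: Or32; lia].
  have [_ _ G_path] := path_potentials (ltnW lN).
  have [_ _ Gm_m] := potentials_perm mp; rewrite Gm_m in G_le tight_xr.
  case: G_le => [s | G_le]; first exact: Or31.
  move: G_le; rewrite leq_eqVlt => /orP[/eqP G_eq | G_lt]; last by apply: Or32; lia.
  have [s | not_stray] := boolP (stray m'); first exact: Or31.
  have xp : inl x \in path_mono l by rewrite -(perm_mem mp).
  by have [ex er] := tight_path (ltnW lN) xp (tight_xr G_eq not_stray); apply: Or33.
split.
  split; first lia.
  case: key => [? | ? | [mp ex er]]; [exact: Or31 | exact: Or32 | apply: Or33].
  by rewrite /m' ex er; apply: perm_trans (perm_dmono _ _ mp) (path_mono_step l).
move=> m'_path; case: key => [off | off | //];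
  (suff : ~~ perm_eq m' (path_mono l.+1) by rewrite m'_path); apply: off_path => //.
- by left.
- by right.
Qed.

Lemma path_mono0 : path_mono 0 = [:: inl (Sb c n)].
Proof. by rewrite /path_mono /path_species /= subn0. Qed.

Lemma reachable0 : reachable 0 (path_mono 0).
Proof. by have [A _ _] := path_potentials (leq0n _); split; [rewrite A | apply: Or33]. Qed.

Local Notation derivatives l := (iter l (ddt (network L Y Sb U)) [:: (1%R, [:: inl (Sb c n)])]).

Lemma path_invariant_derivatives l : (l <= 2 * k + 1)%N ->
  path_invariant reachable path_mono l (derivatives l).
Proof.
rewrite -path_mono0; apply: path_invariant_iter.
- exact: network_uniq.
- exact: reachable0.
- exact: reachable_step.
- by move=> l' _; apply: path_mono_step.
- exact: count_path_species.
- exact: path_reaction_network.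
- exact: path_reaction_produces.
Qed.

Lemma reachable_derivatives l m : (l <= 2 * k + 1)%N ->
  coef (derivatives l) m != 0 -> reachable l m.
Proof.
move=> lN /coef_neq0[t [tp tm t0]]; apply: reachable_perm tm _.
exact: (path_invariant_derivatives lN).1 t tp t0.
Qed.

Definition target r : mono S C := nseq r (inl (Y c)) ++ [:: inl (U c (n - k))].
Definition target_labels : seq (rlabel C) := (c, (n - k)%N, RC) :: path_labels k.

Lemma half_last : ((2 * k + 1)./2 = k) * (odd (2 * k + 1) = true).
Proof. by rewrite addn1 /= mul2n uphalf_double odd_double. Qed.

Lemma path_mono_last : perm_eq (path_mono (2 * k + 1)) (target k ++ map inr target_labels).
Proof.
rewrite /path_mono /path_species !half_last /target /= -cat1s.
by rewrite -catA perm_catCA.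
Qed.

Lemma msum_target f r w : msum f (target r ++ map inr w) = (r * f (Y c) + f (U c (n - k)))%N.
Proof.
rewrite /msum /target !big_cat /= big_nseq big_seq1 big_map big1 // addn0.
by rewrite iter_addn_0 mulnC.
Qed.

Lemma reachable_target l r w : (l <= 2 * k + 1)%N -> reachable l (target r ++ map inr w) ->
  [/\ l = (2 * k + 1)%N, r = k & perm_eq w target_labels].
Proof.
move=> lN [_ reach]; have [AY JY GY] := Y_potentials.
have [] := path_species_potentials (leqnn (2 * k + 1)); rewrite /path_species !half_last.
move=> AU JU GU; have Gm_t : mweight (target r ++ map inr w) = 1%N.
  by rewrite /mweight msum_target GY; lia.
have not_stray : ~~ stray (target r ++ map inr w).
  by rewrite /stray /nalpha /nforeign !msum_target AY JY AU JU muln0.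
have tp : perm_eq (target r ++ map inr w) (path_mono l).
  by case: reach => [s | big | //]; [rewrite s in not_stray | lia].
have [_ _ Gp] := path_potentials lN; have [_ _ Gt] := potentials_perm tp.
have l_last : l = (2 * k + 1)%N by lia.
subst l; have := msum_perm (fun s => s == Y c) tp; rewrite msum_target msum_path.
have /negbTE -> : U c (n - k) != Y c by apply/eqP/U_neq_Y; lia.
have /negbTE -> : path_species (2 * k + 1) != Y c by apply/eqP/path_species_neq_Y.
rewrite half_last eqxx /= => r_k; have {}r_k : r = k by lia.
subst r.
have := perm_trans tp path_mono_last; rewrite perm_cat2l => /(perm_map_inj _) -> //.
by move=> ? ? [].
Qed.
End Component.

End Partition.

End Hypotheses.

End Network.

Local Open Scope ring_scope.

Theorem mainTheorem11 (S : eqType) (C : finType) (L : C -> nat) (Y : C -> S)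
  (Sb U : C -> nat -> S) (part : S -> nat) (M : nat) :
  H1 L Y Sb U -> H2 L Y Sb U part M ->
  forall (c : C) (n k : nat), (1 <= n <= L c)%N -> (k < n)%N ->
  let net := network L Y Sb U in
  let sn : crnpoly S C := [:: (1, [:: inl (Sb c n)])] in
  let mon (r : nat) : mono S C := nseq r (inl (Y c)) ++ [:: inl (U c (n - k)%N)] in
  let W : seq (rlabel C) :=
    (c, (n - k)%N, RC) :: flatten [seq [:: (c, (n - j)%N, RA); (c, (n - j)%N, RC)]
                                  | j <- iota 0 k] in
  (forall l r, (0 < l < 2 * k + 1)%N -> ~ appears (iter l (ddt net) sn) (mon r)) /\
  (forall r, appears (iter (2 * k + 1) (ddt net) sn) (mon r) <-> r = k) /\
  (forall w : seq (rlabel C),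
     coef (iter (2 * k + 1) (ddt net) sn) (mon k ++ map inr w)
     = if perm_eq w W then 1 else 0).
Proof.
move=> hH1 hH2 c n k nL kn net sn mon W.
have on_target l r w : (l <= 2 * k + 1)%N ->
    coef (iter l (ddt net) sn) (mon r ++ map inr w) != 0 ->
    [/\ l = (2 * k + 1)%N, r = k & perm_eq w W].
  move=> lN /(reachable_derivatives hH1 hH2 nL kn lN).
  exact: (reachable_target (r := r) hH1 hH2 nL kn lN).
have coefW w :
    coef (iter (2 * k + 1) (ddt net) sn) (mon k ++ map inr w) = if perm_eq w W then 1 else 0.
  have [wW | wW] := boolP (perm_eq w W); last first.
    apply/eqP; apply: contraNT wW => nz.
    by have [] := on_target _ _ _ (leqnn _) nz.
  have wp : perm_eq (path_mono Y Sb U c n (2 * k + 1)) (mon k ++ map inr w).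
    apply: perm_trans (path_mono_last Y Sb U c n k) _.
    by rewrite perm_cat2l; apply: perm_map; rewrite perm_sym.
  by rewrite -(coef_perm _ wp); exact: (path_invariant_derivatives hH1 hH2 nL kn (leqnn _)).2.
split; [| split] => [l r /andP[_ lN] [w /on_target] | r |]; [by case; lia | split | by []].
  by case=> w /on_target [].
by move=> ->; exists W; rewrite coefW perm_refl.
Qed.
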